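(* Let $(\mathcal{L},\mathcal{D}(\mathcal{L}))$ be the generator of a $C_0$-contraction semigroup $(e^{t\mathcal{L}})_{t\ge0}$ on a Banach space $\mathcal{X}$, let $M\in\mathcal{B}(\mathcal{X})$ be a contraction, and let $P\in\mathcal{B}(\mathcal{X})$ be a projection such that $\|M^n-P\|_\infty\le\delta^n$ for some $\delta\in(0,1)$ and all $n\in\mathbb{N}$. Assume there is $b\ge0$ such that for all $t\ge0$ $$\|Pe^{t\mathcal{L}}(\mathbf{1}-P)\|_\infty\le tb\quad\text{and}\quad\|(\mathbf{1}-P)e^{t\mathcal{L}}P\|_\infty\le tb.$$ If $(P\mathcal{L}P,\mathcal{D}(\mathcal{L}P))$ is the generator of a $C_0$-semigroup, then for every $t\ge0$ there is a constant $c(t,b)>0$, depending on $t$ and $b$ but not on $n$, such that for all $n\in\mathbb{N}$ and all $x\in\mathcal{D}((\mathcal{L}P)^2)$ $$\Big\|\big(Me^{\frac{t}{n}\mathcal{L}}\big)^nx-e^{tP\mathcal{L}P}Px\Big\|\le\frac{c(t,b)}{n}\big(\|x\|+\|\mathcal{L}Px\|+\|(\mathcal{L}P)^2x\|\big)+\delta^n\|x\|.$$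
   Context: $\mathcal{B}(\mathcal{X})$ denotes the bounded linear operators on $\mathcal{X}$ with operator norm $\|\cdot\|_\infty$; $\mathbf{1}$ is the identity. A contraction is an operator of norm at most $1$; a projection is a bounded operator $P$ with $P^2=P$. A $C_0$-contraction semigroup is a strongly continuous semigroup with $\|e^{t\mathcal{L}}\|_\infty\le1$; its generator is $\mathcal{L}x=\lim_{h\downarrow0}(e^{h\mathcal{L}}x-x)/h$ on $\mathcal{D}(\mathcal{L})$, and a $C_0$-semigroup is denoted $e^{t\mathcal{K}}$ by its generator $\mathcal{K}$. Compositions of unbounded operators have natural domains: $\mathcal{D}(\mathcal{L}P)=\{x: Px\in\mathcal{D}(\mathcal{L})\}$, $\mathcal{D}((\mathcal{L}P)^2)=\{x\in\mathcal{D}(\mathcal{L}P):\mathcal{L}Px\in\mathcal{D}(\mathcal{L}P)\}$, and $P\mathcal{L}P$ is considered on $\mathcal{D}(\mathcal{L}P)$. *)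

From HB Require Import structures.
From mathcomp Require Import all_boot all_order all_algebra.
From mathcomp Require Import all_classical all_reals all_analysis.
Set Implicit Arguments. Unset Strict Implicit. Unset Printing Implicit Defensive.
Import Order.TTheory GRing.Theory Num.Theory.
Import numFieldNormedType.Exports.
Local Open Scope classical_set_scope.
Local Open Scope ring_scope.

Section Defs.
Context {R : realType} {X : normedModType R}.

Definition lin_op (A : X -> X) : Prop :=
  forall (a : R) (x y : X), A (a *: x + y) = a *: A x + A y.

Definition op_norm_le (A : X -> X) (c : R) : Prop :=
  forall x : X, `|A x| <= c * `|x|.

Definition bounded_op (A : X -> X) : Prop :=
  lin_op A /\ exists c : R, op_norm_le A c.

Definition contraction_op (A : X -> X) : Prop := lin_op A /\ op_norm_le A 1.

Definition projection_op (P : X -> X) : Prop :=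
  bounded_op P /\ forall x, P (P x) = P x.

(* C0-semigroup (S t)_{t >= 0}; values at t < 0 are irrelevant *)
Definition C0_semigroup (S : R -> X -> X) : Prop :=
  [/\ forall t, 0 <= t -> bounded_op (S t),
      forall x, S 0 x = x,
      forall s t x, 0 <= s -> 0 <= t -> S (s + t) x = S s (S t x) &
      forall x, S t x @[t --> 0^'+] --> x].

Definition C0_contraction_semigroup (S : R -> X -> X) : Prop :=
  C0_semigroup S /\ forall t, 0 <= t -> op_norm_le (S t) 1.

Definition generator (S : R -> X -> X) (D : set X) (L : X -> X) : Prop :=
  (forall x, D x <-> exists l : X, h^-1 *: (S h x - x) @[h --> 0^'+] --> l) /\
  (forall x, D x -> h^-1 *: (S h x - x) @[h --> 0^'+] --> L x).

End Defs.

(* Write tau = t/n and z_k = e^{k tau PLP} P x.  The compressed semigroup only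
   moves the range of P, so every z_k lies in it.  Split M = P + N with
   N = M - P, so that |N| <= delta and PN = NP = 0.  The error
   (M e^{tau L})^k x - z_k then decomposes as a_k + c_k with P c_k = 0: the kernel
   part c_k is contracted by delta at each step and is fed only by the O(tau)
   leak (1 - P) e^{tau L} P, while a_k grows by the O(tau^2) one-step error
   P e^{tau L} z_k - e^{tau PLP} z_k and by the O(tau) coupling P e^{tau L} (1 - P)
   applied to c_k.  Summing n steps gives an O(1/n) error; even the initial
   kernel part delta^n (1 - P) x is O(1/n), since delta^n <= 1/((1 - delta) n).
   The one-step error comes from second-order expansions of both semigroups,
   obtained from Riemann sums instead of integrals, and the local boundedness
   of e^{t PLP} from the Banach-Steinhaus theorem. *)

From HB Require Import structures.
From mathcomp Require Import all_boot all_order all_algebra.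
From mathcomp Require Import all_classical all_reals all_analysis.
From mathcomp Require Import ring lra.
Set Implicit Arguments. Unset Strict Implicit. Unset Printing Implicit Defensive.
Import Order.TTheory GRing.Theory Num.Theory.
Import numFieldNormedType.Exports.
Local Open Scope classical_set_scope.
Local Open Scope ring_scope.

Section LinearOperators.
Context {R : realType} {X : normedModType R}.
Implicit Types (A : X -> X) (c : R).

Lemma lin_op0 A : lin_op A -> A 0 = 0.
Proof. by move=> lA; have := lA (-1) 0 0; rewrite scaler0 addr0 scaleN1r addNr. Qed.

Lemma lin_opD A : lin_op A -> forall x y, A (x + y) = A x + A y.
Proof. by move=> lA x y; have := lA 1 x y; rewrite !scale1r. Qed.

Lemma lin_opZ A : lin_op A -> forall a x, A (a *: x) = a *: A x.
Proof. by move=> lA a x; have := lA a x 0; rewrite (lin_op0 lA) !addr0. Qed.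

Lemma lin_opN A : lin_op A -> forall x, A (- x) = - A x.
Proof. by move=> lA x; rewrite -scaleN1r (lin_opZ lA) scaleN1r. Qed.

Lemma lin_opB A : lin_op A -> forall x y, A (x - y) = A x - A y.
Proof. by move=> lA x y; rewrite (lin_opD lA) (lin_opN lA). Qed.

Lemma lin_op_compl A : lin_op A -> lin_op (fun x => x - A x).
Proof. by move=> lA a x y; rewrite lA scalerBr opprD addrACA. Qed.

Lemma op_norm_le_normr A c : op_norm_le A c -> op_norm_le A `|c|.
Proof. by move=> Ac x; apply: le_trans (Ac x) _; rewrite ler_wpM2r ?ler_norm. Qed.

Lemma bounded_op_ge0 A : bounded_op A -> exists2 c, 0 <= c & op_norm_le A c.
Proof. by move=> [_ [c Ac]]; exists `|c|; last exact: op_norm_le_normr. Qed.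

Lemma op_norm_le_iter A c n : 0 <= c -> op_norm_le A c -> op_norm_le (iter n A) (c ^+ n).
Proof.
move=> c0 Ac x; elim: n => [|n IH]; first by rewrite expr0 mul1r.
by rewrite iterS exprS -mulrA; apply: le_trans (Ac _) _; rewrite ler_wpM2l.
Qed.

End LinearOperators.

Lemma cvg_at_right0P {R : realType} {X : normedModType R} (f : R -> X) (l : X) :
  f h @[h --> 0^'+] --> l <->
  forall e, 0 < e -> exists2 d, 0 < d & forall h, 0 < h -> h < d -> `|f h - l| <= e.
Proof.
split=> [/cvgrPdist_le fl e e0|fl].
  have := fl e e0; rewrite near_withinE => /nbhs_ballP [d d0 Hd].
  exists d => // h h0 hd; rewrite distrC; apply: Hd => //.
  by rewrite -ball_normE /= sub0r normrN gtr0_norm.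
apply/cvgrPdist_le => e e0; have [d d0 Hd] := fl e e0.
near=> h; rewrite distrC; apply: Hd.
  by near: h; exact: nbhs_right_gt.
by near: h; exact: nbhs_right_lt.
Unshelve. all: by end_near. Qed.

Lemma ler_add_gt0_scale {R : realFieldType} (a b c : R) :
  0 <= c -> (forall e, 0 < e -> a <= b + e * c) -> a <= b.
Proof.
move=> c0 H; apply/ler_addgt0Pr => e e0.
apply: le_trans (H (e / (c + 1)) _) _; first by rewrite divr_gt0 // ltr_wpDl.
by rewrite lerD2l mulrAC ler_pdivrMr ?ltr_wpDl // ler_pM2l // lerDl.
Qed.

Section Generator.
Context {R : realType} {X : normedModType R}.
Variables (U : R -> X -> X) (D : set X) (G : X -> X).
Hypotheses (HU : C0_semigroup U) (gU : generator U D G).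

Lemma generator_remainder_small z : D z -> forall e, 0 < e ->
  exists2 d, 0 < d & forall h, 0 < h -> h < d -> `|U h z - z - h *: G z| <= e * h.
Proof.
move=> Dz e e0; have [d d0 Hd] := (cvg_at_right0P _ _).1 (gU.2 z Dz) e e0.
exists d => // h h0 hd.
have -> : U h z - z - h *: G z = h *: (h^-1 *: (U h z - z) - G z).
  by rewrite scalerBr scalerA mulfV ?gt_eqF // scale1r.
by rewrite normrZ gtr0_norm // [e * h]mulrC ler_pM2l // Hd.
Qed.

Lemma generator_semigroup_comm s y :
  0 <= s -> D y -> D (U s y) /\ G (U s y) = U s (G y).
Proof.
move=> s0 Dy; have [Ub _ Uadd _] := HU.
have [lUs _] := Ub s s0; have [c c0 Usc] := bounded_op_ge0 (Ub s s0).
have quot h : 0 < h -> h^-1 *: (U h (U s y) - U s y) - U s (G y) =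
    U s (h^-1 *: (U h y - y) - G y).
  move=> h0; rewrite (lin_opB lUs) (lin_opZ lUs) (lin_opB lUs) -!Uadd ?(ltW h0) //.
  by rewrite (addrC h).
have cvgUs : h^-1 *: (U h (U s y) - U s y) @[h --> 0^'+] --> U s (G y).
  apply/cvg_at_right0P => e e0.
  have e'0 : 0 < e / (c + 1) by rewrite divr_gt0 // ltr_wpDl.
  have [d d0 Hd] := (cvg_at_right0P _ _).1 (gU.2 y Dy) _ e'0.
  exists d => // h h0 hd; rewrite quot //.
  apply: le_trans (Usc _) _; apply: le_trans (ler_wpM2l c0 (Hd _ h0 hd)) _.
  by rewrite mulrA ler_pdivrMr ?ltr_wpDl // [c * e]mulrC ler_pM2l // lerDl.
have DUs : D (U s y) by apply/gU.1; exists (U s (G y)).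
by split=> //; apply: cvg_unique (gU.2 _ DUs) cvgUs.
Qed.

(* A Riemann-sum substitute for [U tau z - z - tau G z = \int_0^tau (U r (G z) - G z) dr]. *)
Lemma semigroup_remainder_le (B : X -> X) (K g tau : R) z :
  lin_op B -> 0 <= tau -> 0 <= K ->
  (forall r v, 0 <= r -> r <= tau -> `|B (U r v)| <= K * `|v|) ->
  (forall r, 0 <= r -> r <= tau -> `|B (U r (G z) - G z)| <= g) ->
  D z -> `|B (U tau z - z - tau *: G z)| <= tau * g.
Proof.
move=> lB tau0 K0 BU Bg Dz; have [Ub U0 Uadd _] := HU.
have [->|tau_neq0] := eqVneq tau 0.
  by rewrite U0 subrr scale0r subr0 (lin_op0 lB) normr0 mul0r.
have taup : 0 < tau by rewrite lt_def tau_neq0.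
apply: (@ler_add_gt0_scale _ _ _ (K * tau)); first exact: mulr_ge0.
move=> e e0; have [d d0 Hd] := generator_remainder_small Dz e0.
pose m := (Num.truncn (tau / d)).+1; pose h := tau / m%:R.
have m0 : 0 < m%:R :> R by rewrite ltr0n.
have h0 : 0 < h by rewrite divr_gt0.
have hd : h < d by rewrite ltr_pdivrMr // mulrC -ltr_pdivrMr // truncnS_gt.
have hm : m%:R * h = tau by rewrite mulrC divfK ?gt_eqF.
have grid j : (j <= m)%N ->
    `|B (U (j%:R * h) z - z - (j%:R * h) *: G z)| <= j%:R * (K * (e * h) + h * g).
  elim: j => [|j IH] jm.
    by rewrite mul0r U0 subrr scale0r subr0 (lin_op0 lB) normr0 mul0r.
  set s := j%:R * h in IH *.
  have s0 : 0 <= s by rewrite mulr_ge0 // ltW.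
  have st : s <= tau by rewrite -hm ler_pM2r // ler_nat ltnW.
  have [lUs _] := Ub s s0.
  have -> : j.+1%:R * h = s + h by rewrite -addn1 natrD mulrDl mul1r.
  have -> : U (s + h) z - z - (s + h) *: G z = (U s z - z - s *: G z) +
      U s (U h z - z - h *: G z) + h *: (U s (G z) - G z).
    rewrite Uadd ?(ltW h0) // !(lin_opB lUs) (lin_opZ lUs) scalerDl scalerBr.
    set a := U s (U h z); set c := U s z; set r := h *: U s (G z).
    rewrite -[RHS]addrA (addrA (a - c - r)) subrK [RHS]addrACA -opprD.
    by rewrite (addrC (c - z)) addrA subrK.
  rewrite (lin_opD lB _ (h *: _)) (lin_opD lB (_ - _ - _)) (lin_opZ lB).
  rewrite -addn1 natrD mulrDl mul1r -addrA.
  apply: le_trans (ler_normD _ _) _; apply: lerD; first exact: IH (ltnW jm).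
  apply: le_trans (ler_normD _ _) _; apply: lerD.
    by apply: le_trans (BU _ _ s0 st) _; rewrite ler_wpM2l // Hd.
  by rewrite normrZ gtr0_norm // ler_wpM2l ?Bg // ltW.
have := grid m (leqnn m); rewrite hm => /le_trans; apply.
rewrite -hm; lra.
Qed.

Lemma semigroup_increment_le (K t : R) w :
  0 <= K -> (forall r, 0 <= r -> r <= t -> op_norm_le (U r) K) -> D w ->
  forall r, 0 <= r -> r <= t -> `|U r w - w| <= r * ((K + 2) * `|G w|).
Proof.
move=> K0 UK Dw r r0 rt.
have rem : `|U r w - w - r *: G w| <= r * ((K + 1) * `|G w|).
  apply: (semigroup_remainder_le (B := id) (K := K)) => //.
  - by move=> r' v r'0 r'r; apply: UK => //; apply: le_trans rt.
  - move=> r' r'0 r'r; apply: le_trans (ler_normB _ _) _.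
    by rewrite mulrDl mul1r lerD2r UK // (le_trans r'r).
rewrite -(subrK (r *: G w) (U r w - w)); apply: le_trans (ler_normD _ _) _.
rewrite normrZ ger0_norm //; apply: le_trans (lerD rem (lexx _)) _.
lra.
Qed.

Lemma semigroup_remainder2_le (K t : R) z :
  0 <= K -> (forall r, 0 <= r -> r <= t -> op_norm_le (U r) K) -> D z -> D (G z) ->
  forall tau, 0 <= tau -> tau <= t ->
  `|U tau z - z - tau *: G z| <= tau * (tau * ((K + 2) * `|G (G z)|)).
Proof.
move=> K0 UK Dz DGz tau tau0 taut.
apply: (semigroup_remainder_le (B := id) (K := K)) => //.
- by move=> r v r0 rtau; apply: UK => //; apply: le_trans taut.
- move=> r r0 rtau; apply: le_trans (semigroup_increment_le K0 UK DGz r0 _) _.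
    exact: le_trans taut.
  by rewrite ler_wpM2r // mulr_ge0 // addr_ge0.
Qed.

End Generator.

Section LocalBound.
Context {R : realType} {X : completeNormedModType R}.
Variable T : R -> X -> X.
Hypothesis HT : C0_semigroup T.

Lemma C0_semigroup_iter m s x : 0 <= s -> T (m%:R * s) x = iter m (T s) x.
Proof.
move=> s0; have [_ T0 Tadd _] := HT.
elim: m => [|m IH]; first by rewrite mul0r T0.
by rewrite iterS -IH -addn1 natrD mulrDl mul1r addrC Tadd // mulr_ge0.
Qed.

Lemma C0_semigroup_pointwise_bounded (r : nat -> R) :
  (forall n, 0 <= r n <= n.+1%:R^-1) -> pointwise_bounded (range (fun n => T (r n))).
Proof.
move=> rn x; have [_ T0 _ Tc] := HT.
have [d d0 Hd] := (cvg_at_right0P _ _).1 (Tc x) 1 ltr01.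
pose N := Num.truncn d^-1.
have tail n : (N <= n)%N -> `|T (r n) x| <= `|x| + 1.
  move=> Nn; have /andP[r0 rn1] := rn n.
  have [->|r_neq0] := eqVneq (r n) 0; first by rewrite T0 lerDl.
  have rd : r n < d.
    apply: le_lt_trans rn1 _; rewrite invf_plt ?posrE ?ltr0n //.
    by apply: lt_le_trans (truncnS_gt _) _; rewrite ler_nat.
  rewrite -(subrK x (T (r n) x)) addrC; apply: le_trans (ler_normD _ _) _.
  by rewrite lerD2l Hd // lt_def r_neq0.
exists (`|x| + 1 + \sum_(k < N) `|T (r k) x|) => _ [n _ <-].
have [nN|Nn] := ltnP n N.
  rewrite (bigD1 (Ordinal nN)) //= addrCA lerDl.
  by rewrite addr_ge0 ?sumr_ge0 // addr_ge0.
by apply: le_trans (tail n Nn) _; rewrite lerDl sumr_ge0.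
Qed.

Lemma C0_semigroup_bounded_near0 :
  exists2 e, 0 < e & exists2 K, 0 <= K & forall r, 0 <= r -> r <= e -> op_norm_le (T r) K.
Proof.
have [Tb _ _ _] := HT.
apply: contrapT => unbounded.
have bad n : exists rx : R * X,
    0 <= rx.1 <= n.+1%:R^-1 /\ n.+1%:R * `|rx.2| < `|T rx.1 rx.2|.
  apply: contrapT => nbad; apply: unbounded.
  exists n.+1%:R^-1; first by rewrite invr_gt0 ltr0n.
  exists n.+1%:R => // r r0 rn x; rewrite leNgt; apply/negP => lt.
  by apply: nbad; exists (r, x); rewrite r0 rn.
have [f Hf] := choice bad.
have ub : uniform_bounded (range (fun n => T (f n).1)).
  apply: Banach_Steinhauss; last by apply: C0_semigroup_pointwise_bounded => n; case: (Hf n).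
  move=> _ [n _ <-]; have [r0 _] := andP (Hf n).1.
  have [lTr _] := Tb _ r0; have [c c0 Trc] := bounded_op_ge0 (Tb _ r0).
  split=> // s; exists (c * s) => y ys.
  by apply: le_trans (Trc y) _; rewrite ler_wpM2l.
have [M HM] := ub 1; pose n := Num.truncn M.
have [/andP[r0 _] Tbig] := Hf n; set r := (f n).1 in r0 Tbig; set y := (f n).2 in Tbig.
have [lTr _] := Tb _ r0.
have y_neq0 : y != 0.
  by apply: contra_ltN Tbig => /eqP ->; rewrite (lin_op0 lTr) !normr0 mulr0.
have ny : 0 < `|y| by rewrite normr_gt0.
have := HM (T r) (ex_intro2 _ _ n I erefl) (`|y|^-1 *: y).
rewrite normrZ normfV normr_id mulVf ?gt_eqF // lexx (lin_opZ lTr) normrZ normfV normr_id.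
move=> /(_ isT); rewrite ler_pdivrMl // => le_M.
have := lt_le_trans Tbig le_M; rewrite mulrC ltr_pM2l //.
by apply/negP; rewrite -leNgt ltW // truncnS_gt.
Qed.

Lemma C0_semigroup_locally_bounded t :
  exists2 K, 0 <= K & forall r, 0 <= r -> r <= t -> op_norm_le (T r) K.
Proof.
have [e e0 [K K0 TK]] := C0_semigroup_bounded_near0.
pose m := (Num.truncn (t / e)).+1.
have m0 : 0 < m%:R :> R by rewrite ltr0n.
exists (K ^+ m); first exact: exprn_ge0.
move=> r r0 rt x; have rm0 : 0 <= r / m%:R by rewrite divr_ge0 // ltW.
rewrite -(divfK (lt0r_neq0 m0) r) mulrC C0_semigroup_iter //.
apply: op_norm_le_iter => //; apply: TK => //.
rewrite ler_pdivrMr //; apply: le_trans rt _.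
by rewrite mulrC -ler_pdivrMr // ltW // truncnS_gt.
Qed.

End LocalBound.

Lemma natr_mul_expr_le {R : realFieldType} (d : R) n :
  0 <= d -> d <= 1 -> n%:R * d ^+ n * (1 - d) <= 1 - d ^+ n.
Proof.
move=> d0 d1; elim: n => [|n IH]; first by rewrite !mul0r expr0 subrr.
have dn0 : 0 <= d ^+ n by exact: exprn_ge0.
have dn1 : d ^+ n <= 1 by exact: exprn_ile1.
have := ler_wpM2l d0 IH.
have : 0 <= (1 - d) * (1 - d * d ^+ n) by rewrite mulr_ge0 ?subr_ge0 ?mulr_ile1.
rewrite exprS -addn1 natrD; nra.
Qed.

Lemma expr_le_inv_natr {R : realFieldType} (d : R) n :
  0 <= d -> d < 1 -> (0 < n)%N -> d ^+ n <= (1 - d)^-1 / n%:R.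
Proof.
move=> d0 d1 n0; have := natr_mul_expr_le n d0 (ltW d1) => le_geo.
have dn0 : 0 <= d ^+ n by exact: exprn_ge0.
have n0' : 0 < n%:R :> R by rewrite ltr0n.
have d1' : 0 < 1 - d by rewrite subr_gt0.
by rewrite ler_pdivlMr // -(ler_pM2r d1') mulVf ?gt_eqF //; nra.
Qed.

Lemma le0_of_le_expr {R : realType} (d a C : R) : 0 <= d -> d < 1 -> 0 <= C ->
  (forall n, (0 < n)%N -> a <= C * d ^+ n) -> a <= 0.
Proof.
move=> d0 d1 C0 aC; rewrite leNgt; apply/negP => a0.
pose u := (1 - d)^-1; pose n := (Num.truncn (C * u / a)).+1.
have n0 : 0 < n%:R :> R by rewrite ltr0n.
have Cu_lt : C * u < a * n%:R by rewrite -ltr_pdivrMl // mulrC truncnS_gt.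
have := le_trans (aC n isT) (ler_wpM2l C0 (@expr_le_inv_natr _ _ n d0 d1 isT)).
by rewrite mulrA ler_pdivlMr // leNgt Cu_lt.
Qed.

Section PowerLimit.
Context {R : realType} {X : normedModType R}.
Variables (M P : X -> X) (d : R).
Hypotheses (lM : lin_op M) (HM : op_norm_le M 1) (d0 : 0 <= d) (d1 : d < 1)
  (Mpow : forall n, (0 < n)%N -> op_norm_le (fun y => iter n M y - P y) (d ^+ n)).

Lemma iterS_limit_le n y : `|iter n.+1 M y - P y| <= d ^+ n * `|y|.
Proof.
have := Mpow (isT : (0 < n.+1)%N) y; rewrite /= => /le_trans; apply.
by apply: ler_wpM2r => //; rewrite exprS; apply: ler_piMl; [exact: exprn_ge0 | exact: ltW].
Qed.

Lemma iter_limit_fixed y : M (P y) = P y.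
Proof.
apply/eqP; rewrite -subr_eq0 -normr_le0.
apply: (@le0_of_le_expr _ d _ (2 * `|y|)) => // n n0.
have -> : M (P y) - P y = M (P y - iter n M y) + (iter n.+1 M y - P y).
  by rewrite (lin_opB lM) iterS addrA subrK.
rewrite -mulrA [`|y| * _]mulrC mulr_natl mulr2n.
apply: le_trans (ler_normD _ _) (lerD _ (iterS_limit_le _ _)).
apply: le_trans (HM _) _; rewrite mul1r -opprB normrN.
by have := Mpow n0 y.
Qed.

Lemma iter_limit_invariant y : P (M y) = P y.
Proof.
apply/eqP; rewrite -subr_eq0 -normr_le0.
apply: (@le0_of_le_expr _ d _ (2 * `|y|)) => // n n0.
have -> : P (M y) - P y = (P (M y) - iter n M (M y)) + (iter n.+1 M y - P y).
  by rewrite iterSr addrA subrK.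
rewrite -mulrA [`|y| * _]mulrC mulr_natl mulr2n.
apply: le_trans (ler_normD _ _) (lerD _ (iterS_limit_le _ _)).
rewrite -opprB normrN; have := Mpow n0 (M y); rewrite /= => /le_trans; apply.
by rewrite ler_wpM2l ?exprn_ge0 // -[X in _ <= X]mul1r HM.
Qed.

End PowerLimit.

Section Compression.
Context {R : realType} {X : completeNormedModType R}.
Variables (S T : R -> X -> X) (D : set X) (L P : X -> X) (b cp : R).
Hypotheses (HS : C0_contraction_semigroup S) (gS : generator S D L)
  (lP : lin_op P) (cp0 : 0 <= cp) (HP : op_norm_le P cp) (PP : forall y, P (P y) = P y)
  (b0 : 0 <= b)
  (PSQ : forall t, 0 <= t -> op_norm_le (fun y => P (S t (y - P y))) (t * b))
  (QSP : forall t, 0 <= t -> op_norm_le (fun y => S t (P y) - P (S t (P y))) (t * b))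
  (HT : C0_semigroup T) (gT : generator T (fun y => D (P y)) (fun y => P (L (P y)))).

Lemma compl_norm_le v : `|v - P v| <= (1 + cp) * `|v|.
Proof. by rewrite mulrDl mul1r; apply: le_trans (ler_normB _ _) _; rewrite lerD2l. Qed.

Lemma generator_compl_le z : P z = z -> D z -> `|L z - P (L z)| <= b * `|z|.
Proof.
move=> Pz Dz; apply: (@ler_add_gt0_scale _ _ _ (1 + cp)); first by rewrite addr_ge0.
move=> e e0; have [d d0 Hd] := generator_remainder_small gS Dz e0.
pose h := d / 2; have h0 : 0 < h by rewrite divr_gt0.
have hd : h < d by rewrite ltr_pdivrMr // ltr_pMr // ltr1n.
pose Q v := v - P v; have lQ : lin_op Q := lin_op_compl lP.
pose w := S h z - z - h *: L z.
have QSz : Q (S h z) = h *: Q (L z) + Q w.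
  have -> : S h z = z + (h *: L z + w) by rewrite /w !subrKC.
  have Qz : Q z = 0 by rewrite /Q Pz subrr.
  by rewrite !(lin_opD lQ) (lin_opZ lQ) Qz add0r.
have QSz_le : `|Q (S h z)| <= h * b * `|z| by have := QSP (ltW h0) z; rewrite /= Pz.
have Qw_le : `|Q w| <= (1 + cp) * (e * h).
  by apply: le_trans (compl_norm_le _) _; rewrite ler_wpM2l ?addr_ge0 ?Hd.
rewrite -(ler_pM2l h0); have := ler_normB (Q (S h z)) (Q w).
rewrite {1}QSz addrK normrZ gtr0_norm // => /le_trans; apply.
by apply: le_trans (lerD QSz_le Qw_le) _; lra.
Qed.

Lemma proj_remainder2_le z tau :
  D z -> D (P (L z)) -> 0 <= tau ->
  `|P (S tau z - z - tau *: L z)| <= tau * (tau * (b * `|L z| + cp * (3 * `|L (P (L z))|))).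
Proof.
move=> Dz DPLz tau0; have [[Sb _ _ _] Sc] := HS.
have S1 r : 0 <= r -> r <= tau -> op_norm_le (S r) 1 by move=> r0 _; exact: Sc.
apply: (semigroup_remainder_le HS.1 gS (K := cp)) => //.
- move=> r v r0 _; apply: le_trans (HP _) _; rewrite ler_wpM2l //.
  by have := Sc r r0 v; rewrite mul1r.
- move=> r r0 rt; have [lSr _] := Sb r r0.
  have -> : P (S r (L z) - L z) = P (S r (L z - P (L z))) + P (S r (P (L z)) - P (L z)).
    by rewrite !(lin_opB lP) (lin_opB lSr) (lin_opB lP) PP addrA subrK.
  apply: le_trans (ler_normD _ _) _; rewrite mulrDr; apply: lerD.
    by apply: le_trans (PSQ r0 (L z)) _; rewrite -mulrA ler_wpM2r // mulr_ge0.
  apply: le_trans (HP _) _; rewrite mulrCA ler_wpM2l //.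
  apply: le_trans (semigroup_increment_le HS.1 gS ler01 S1 DPLz r0 rt) _.
  by rewrite ler_wpM2r // mulr_ge0.
Qed.

Lemma compressed_semigroup_compl s y :
  0 <= s -> D (P y) -> T s y - P (T s y) = y - P y.
Proof.
move=> s0 Dy; have [K K0 TK] := C0_semigroup_locally_bounded HT s.
pose Q v := v - P v; pose G v := P (L (P v)).
have lQ : lin_op Q := lin_op_compl lP.
have QG v : Q (G v) = 0 by rewrite /Q /G PP subrr.
have : `|Q (T s y - y - s *: G y)| <= s * 0.
  apply: (semigroup_remainder_le HT gT (K := (1 + cp) * K)) => //.
  - by rewrite mulr_ge0 ?addr_ge0.
  - move=> r v r0 rs; apply: le_trans (compl_norm_le _) _.
    by rewrite -mulrA ler_wpM2l ?addr_ge0 ?TK.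
  - move=> r r0 _; have [_ <-] := generator_semigroup_comm HT gT r0 Dy.
    by rewrite -/(G _) (lin_opB lQ) !QG subrr normr0.
rewrite mulr0 normr_le0 => /eqP.
rewrite !(lin_opB lQ) (lin_opZ lQ) QG scaler0 subr0.
by move=> /eqP; rewrite subr_eq0 => /eqP.
Qed.

Lemma compressed_orbit s x : 0 <= s -> D (P x) -> D (P (L (P x))) ->
  let z := T s (P x) in
  [/\ P z = z, D z, D (P (L z)), P (L z) = T s (P (L (P x))) &
      P (L (P (L z))) = T s (P (L (P (L (P x)))))].
Proof.
move=> s0 Dx DLx z.
have DPPx : D (P (P x)) by rewrite PP.
have Pz : P z = z.
  by have /eqP := compressed_semigroup_compl s0 DPPx; rewrite PP subrr subr_eq0 => /eqP.
have [Dz LPz] := generator_semigroup_comm HT gT s0 DPPx.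
rewrite /= -/z Pz PP in Dz LPz.
have DPLPx : D (P (P (L (P x)))) by rewrite PP.
have [DLz LPLz] := generator_semigroup_comm HT gT s0 DPLPx.
by rewrite /= -LPz !PP in DLz LPLz.
Qed.

Section LocalError.
Variables (K t : R).
Hypotheses (K0 : 0 <= K) (TK : forall r, 0 <= r -> r <= t -> op_norm_le (T r) K).

Lemma local_error_le z tau : P z = z -> D z -> D (P (L z)) -> 0 <= tau -> tau <= t ->
  `|P (S tau z) - T tau z| <= tau * (tau *
    (b * `|L z| + cp * (3 * `|L (P (L z))|) + (K + 2) * `|P (L (P (L z)))|)).
Proof.
move=> Pz Dz DLz tau0 taut.
have DPz : D (P z) by rewrite Pz.
have DPGz : D (P (P (L (P z)))) by rewrite Pz PP.
have := semigroup_remainder2_le HT gT K0 TK DPz DPGz tau0 taut.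
rewrite /= Pz !PP => remT.
have -> : P (S tau z) - T tau z =
    P (S tau z - z - tau *: L z) - (T tau z - z - tau *: P (L z)).
  by rewrite !(lin_opB lP) (lin_opZ lP) Pz opprB subrKA opprB subrKA.
apply: le_trans (ler_normB _ _) _; rewrite mulrDr mulrDr.
exact: lerD (proj_remainder2_le Dz DLz tau0) remT.
Qed.

End LocalError.

End Compression.

Section PerturbedIteration.
Context {R : realType} {X : normedModType R}.
Variables (M P V : X -> X) (d kappa rho W : R) (z : nat -> X) (n : nat).
Hypotheses (lM : lin_op M) (HM : op_norm_le M 1) (lP : lin_op P)
  (PP : forall y, P (P y) = P y) (MP : forall y, M (P y) = P y)
  (PM : forall y, P (M y) = P y) (d0 : 0 <= d) (d1 : d < 1)
  (Md : op_norm_le (fun y => M y - P y) d)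
  (lV : lin_op V) (HV : op_norm_le V 1) (kappa0 : 0 <= kappa)
  (PVQ : op_norm_le (fun y => P (V (y - P y))) kappa)
  (QVP : op_norm_le (fun y => V (P y) - P (V (P y))) kappa)
  (Pz : forall k, (k < n)%N -> P (z k) = z k)
  (zW : forall k, (k < n)%N -> `|z k| <= W)
  (z_step : forall k, (k < n)%N -> `|P (V (z k)) - z k.+1| <= rho)
  (W0 : 0 <= W).

Let N y := M y - P y.

Lemma proj_limit_defect y : P (N y) = 0.
Proof. by rewrite /N (lin_opB lP) PM PP subrr. Qed.

Lemma leak_le v : P v = v -> `|N (V v)| <= d * (kappa * `|v|).
Proof.
move=> Pv; have -> : N (V v) = N (V v - P (V v)).
  by rewrite /N (lin_opB lM) (lin_opB lP) MP PP subrr subr0.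
apply: le_trans (Md _) _; rewrite ler_wpM2l //.
by have := QVP v; rewrite /= Pv.
Qed.

Lemma coupling_le c : P c = 0 -> `|P (V c)| <= kappa * `|c|.
Proof. by move=> Pc; have := PVQ c; rewrite /= Pc subr0. Qed.

Variable x : X.
Hypothesis z0 : z 0 = P x.

Let A y := M (V y).
Let u := (1 - d)^-1.

(* [c] is the part of the error killed by [P], which [M] contracts by [d]; [a]
   accumulates the one-step errors and the coupling of [c] back into the range. *)
Lemma iterate_error_split k : (k <= n)%N ->
  exists a c, [/\ iter k A x - z k = a + c, P c = 0,
    `|c| <= d ^+ k * `|x - P x| + d * kappa * W * u &
    `|a| <= k%:R * (rho + kappa * (d * kappa * W) * u) + kappa * `|x - P x| * (1 - d ^+ k) * u].
Proof.
have d1' : 1 - d != 0 by rewrite subr_eq0 eq_sym lt_eqF.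
have u0 : 0 <= u by rewrite invr_ge0 subr_ge0 ltW.
set cq := `|x - P x|; set beta := d * kappa * W.
elim: k => [|k IH] kn.
  exists 0, (x - P x); split.
  - by rewrite /= z0 add0r.
  - by rewrite (lin_opB lP) PP subrr.
  - by rewrite expr0 mul1r lerDl /beta !mulr_ge0.
  - by rewrite normr0 expr0 subrr mulr0 mul0r mul0r addr0.
have [a [c [e_split Pc c_le a_le]]] := IH (ltnW kn).
exists (A a + P (V c) + (P (V (z k)) - z k.+1)), (N (V c) + N (V (z k))); split.
- have -> : iter k.+1 A x = A (a + c + z k) by rewrite iterS -e_split subrK.
  rewrite /A /N !(lin_opD lV) !(lin_opD lM).
  set p := P (V c); set q := P (V (z k)).
  rewrite [RHS]addrACA -[M (V a) + p + _]addrA subrKC [(q - _) + _]addrC.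
  by rewrite [(_ - q) + _]addrA subrK !addrA.
- by rewrite (lin_opD lP) !proj_limit_defect addr0.
- have Nc : `|N (V c)| <= d * `|c|.
    by apply: le_trans (Md _) _; rewrite ler_wpM2l //; have := HV c; rewrite mul1r.
  have Nz : `|N (V (z k))| <= beta.
    by apply: le_trans (leak_le (Pz kn)) _; rewrite /beta -mulrA ler_wpM2l ?ler_wpM2l ?zW.
  apply: le_trans (ler_normD _ _) _; apply: le_trans (lerD Nc Nz) _.
  apply: le_trans (lerD (ler_wpM2l d0 c_le) (lexx _)) _.
  by rewrite exprS le_eqVlt; apply/orP; left; apply/eqP; rewrite /u; field.
- have MVa : `|A a| <= `|a|.
    by apply: le_trans (HM _) _; rewrite mul1r; apply: le_trans (HV _) _; rewrite mul1r.
  have PVc : `|P (V c)| <= kappa * (d ^+ k * cq + beta * u).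
    exact: le_trans (coupling_le Pc) (ler_wpM2l kappa0 c_le).
  apply: le_trans (ler_normD _ _) _; apply: le_trans (lerD (ler_normD _ _) (z_step kn)) _.
  apply: le_trans (lerD (lerD (le_trans MVa a_le) PVc) (lexx _)) _.
  by rewrite exprS -addn1 natrD le_eqVlt; apply/orP; left; apply/eqP; rewrite /u; field.
Qed.

Lemma perturbed_iterate_error_le :
  `|iter n A x - z n| <= n%:R * (rho + kappa * (d * kappa * W) * u)
    + kappa * `|x - P x| * u + d ^+ n * `|x - P x| + d * kappa * W * u.
Proof.
have [a [c [-> _ c_le a_le]]] := iterate_error_split (leqnn n).
have u0 : 0 <= u by rewrite invr_ge0 subr_ge0 ltW.
have shrink : kappa * `|x - P x| * (1 - d ^+ n) * u <= kappa * `|x - P x| * u.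
  rewrite ler_wpM2r // ler_piMr ?mulr_ge0 // lerBlDr lerDl exprn_ge0 //.
apply: le_trans (ler_normD _ _) _; lra.
Qed.
End PerturbedIteration.

Definition trotter_const {R : realType} (t b cp K d : R) : R :=
  t ^+ 2 * K * cp * (b * (1 + b) + cp * (3 * (1 + b)) + (K + 2) + b ^+ 2 * d / (1 - d))
  + (t * b + 1) * (1 + cp) / (1 - d) + d * t * b * K * cp / (1 - d).

Lemma trotter_const_ge0 {R : realType} (t b cp K d : R) :
  0 <= t -> 0 <= b -> 0 <= cp -> 0 <= K -> 0 <= d -> d < 1 -> 0 <= trotter_const t b cp K d.
Proof.
move=> t0 b0 cp0 K0 d0 d1; have u0 : 0 <= (1 - d)^-1 by rewrite invr_ge0 subr_ge0 ltW.
rewrite /trotter_const.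
by repeat (apply: addr_ge0 || apply: mulr_ge0 || apply: exprn_ge0); rewrite ?ler01 ?ler0n.
Qed.

Section TrotterError.
Context {R : realType} {X : completeNormedModType R}.
Variables (S T : R -> X -> X) (D : set X) (L M P : X -> X) (d b cp K t : R).
Hypotheses (HS : C0_contraction_semigroup S) (gS : generator S D L)
  (lM : lin_op M) (HM : op_norm_le M 1)
  (lP : lin_op P) (cp0 : 0 <= cp) (HP : op_norm_le P cp) (PP : forall y, P (P y) = P y)
  (d0 : 0 <= d) (d1 : d < 1)
  (Mpow : forall n, (0 < n)%N -> op_norm_le (fun y => iter n M y - P y) (d ^+ n))
  (b0 : 0 <= b)
  (PSQ : forall t, 0 <= t -> op_norm_le (fun y => P (S t (y - P y))) (t * b))
  (QSP : forall t, 0 <= t -> op_norm_le (fun y => S t (P y) - P (S t (P y))) (t * b))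
  (HT : C0_semigroup T) (gT : generator T (fun y => D (P y)) (fun y => P (L (P y))))
  (K0 : 0 <= K) (TK : forall r, 0 <= r -> r <= t -> op_norm_le (T r) K) (t0 : 0 <= t).

Variables (n : nat) (x : X).
Hypotheses (n0 : (0 < n)%N) (Dx : D (P x)) (DLx : D (P (L (P x)))).

Let tau := t / n%:R.
Let N0 := `|x| + `|L (P x)| + `|L (P (L (P x)))|.
Let W := K * cp * N0.
Let z k := T (k%:R * tau) (P x).

Let nR : 0 < n%:R :> R. Proof. by rewrite ltr0n. Qed.
Let tau0 : 0 <= tau. Proof. exact: divr_ge0 t0 (ltW nR). Qed.

Lemma step_time_le k : (k <= n)%N -> 0 <= k%:R * tau <= t.
Proof. by move=> kn; rewrite mulr_ge0 //= /tau mulrA ler_pdivrMr // mulrC ler_wpM2l // ler_nat. Qed.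

Lemma orbit_bounds k : (k <= n)%N -> [/\ P (z k) = z k, D (z k), D (P (L (z k))) &
    [/\ `|z k| <= W, `|P (L (z k))| <= W & `|P (L (P (L (z k))))| <= W]].
Proof.
move=> kn; have /andP[s0 st] := step_time_le kn.
have [Pz Dz DLz LPz LPLz] := compressed_orbit lP cp0 HP PP HT gT s0 Dx DLx.
have TPW v : `|v| <= N0 -> `|T (k%:R * tau) (P v)| <= W.
  move=> vN; apply: le_trans (TK s0 st _) _; rewrite /W -mulrA ler_wpM2l //.
  by apply: le_trans (HP _) _; rewrite ler_wpM2l.
have [[nx nLx] nLLx] := (normr_ge0 x, normr_ge0 (L (P x)), normr_ge0 (L (P (L (P x))))).
by rewrite /z; split=> //; split; rewrite ?LPLz ?LPz; apply: TPW; rewrite /N0; lra.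
Qed.

Lemma orbit_step k : (k < n)%N -> `|P (S tau (z k)) - z k.+1|
    <= tau * (tau * ((b * (1 + b) + cp * (3 * (1 + b)) + (K + 2)) * W)).
Proof.
move=> kn; have [Pz Dz DLz [zW LzW LLzW]] := orbit_bounds (ltnW kn).
have taut : tau <= t by have /andP[_] := step_time_le n0; rewrite mul1r.
have -> : z k.+1 = T tau (z k).
  have [_ _ Tadd _] := HT; rewrite /z -addn1 natrD mulrDl mul1r addrC Tadd //.
  by case/andP: (step_time_le (ltnW kn)).
apply: le_trans (local_error_le HS gS lP cp0 HP PP b0 PSQ HT gT K0 TK Pz Dz DLz tau0 taut) _.
have L_le v : P v = v -> D v -> `|v| <= W -> `|P (L v)| <= W -> `|L v| <= (1 + b) * W.
  move=> Pv Dv vW LvW; rewrite -(subrK (P (L v)) (L v)); apply: le_trans (ler_normD _ _) _.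
  apply: le_trans (lerD (generator_compl_le gS lP cp0 HP QSP Pv Dv) LvW) _.
  by rewrite mulrDl mul1r addrC lerD2l; exact: ler_wpM2l.
have Lz := L_le _ Pz Dz zW LzW; have LLz := L_le _ (PP _) DLz LzW LLzW.
rewrite !ler_wpM2l //.
have := lerD (lerD (ler_wpM2l b0 Lz) (ler_wpM2l cp0 (ler_wpM2l (ler0n _ 3) LLz)))
  (ler_wpM2l (addr_ge0 K0 (ler0n _ 2)) LLzW).
by move/le_trans; apply; lra.
Qed.

Lemma trotter_error_le : `|iter n (fun y => M (S tau y)) x - T t (P x)|
  <= trotter_const t b cp K d / n%:R * N0.
Proof.
have [[Sb _ _ _] Sc] := HS; have [_ T0 _ _] := HT.
have Pz k : (k < n)%N -> P (z k) = z k by move=> kn; case: (orbit_bounds (ltnW kn)).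
have zW k : (k < n)%N -> `|z k| <= W by move=> kn; have [_ _ _ []] := orbit_bounds (ltnW kn).
have W0 : 0 <= W by rewrite !mulr_ge0 // /N0 !addr_ge0.
have z0 : z 0%N = P x by rewrite /z mul0r T0.
have Md : op_norm_le (fun y => M y - P y) d by have := Mpow (isT : (0 < 1)%N); rewrite expr1.
have := perturbed_iterate_error_le lM HM lP PP (iter_limit_fixed lM HM d0 d1 Mpow)
  (iter_limit_invariant HM d0 d1 Mpow) d0 d1 Md (Sb tau tau0).1 (Sc tau tau0)
  (mulr_ge0 tau0 b0) (PSQ tau0) (QSP tau0) Pz zW orbit_step W0 z0.
have -> : z n = T t (P x) by rewrite /z /tau mulrC divfK ?gt_eqF.
move=> /le_trans; apply.
have d1' : 1 - d != 0 by rewrite subr_eq0 eq_sym lt_eqF.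
have u0 : 0 <= (1 - d)^-1 by rewrite invr_ge0 subr_ge0 ltW.
have cq_le : `|x - P x| <= (1 + cp) * N0.
  apply: le_trans (compl_norm_le HP x) _; rewrite ler_wpM2l ?addr_ge0 // /N0.
  by rewrite -addrA lerDl addr_ge0.
have e1 : tau * b * `|x - P x| * (1 - d)^-1 <= tau * b * ((1 + cp) * N0) * (1 - d)^-1.
  by rewrite ler_wpM2r // ler_wpM2l // mulr_ge0.
have e2 : d ^+ n * `|x - P x| <= (1 - d)^-1 / n%:R * ((1 + cp) * N0).
  by rewrite ler_pM ?exprn_ge0 ?expr_le_inv_natr.
have -> : trotter_const t b cp K d / n%:R * N0 =
    n%:R * (tau * (tau * ((b * (1 + b) + cp * (3 * (1 + b)) + (K + 2)) * W))
      + tau * b * (d * (tau * b) * W) * (1 - d)^-1)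
    + tau * b * ((1 + cp) * N0) * (1 - d)^-1 + (1 - d)^-1 / n%:R * ((1 + cp) * N0)
    + d * (tau * b) * W * (1 - d)^-1.
  by rewrite /trotter_const /tau /W; field; rewrite d1' gt_eqF.
lra.
Qed.

End TrotterError.

Theorem theorem5p1 (R : realType) (X : completeNormedModType R)
  (S : R -> X -> X) (D : set X) (L : X -> X)
  (M P : X -> X) (delta b : R) (T : R -> X -> X) :
  C0_contraction_semigroup S ->
  generator S D L ->
  contraction_op M ->
  projection_op P ->
  0 < delta -> delta < 1 ->
  (forall n : nat, (0 < n)%N ->
     op_norm_le (fun y => iter n M y - P y) (delta ^+ n)) ->
  0 <= b ->
  (forall t : R, 0 <= t ->
     op_norm_le (fun y => P (S t (y - P y))) (t * b)) ->
  (forall t : R, 0 <= t ->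
     op_norm_le (fun y => S t (P y) - P (S t (P y))) (t * b)) ->
  (* (PLP, D(LP)) generates the C0-semigroup T = e^{t PLP} *)
  C0_semigroup T ->
  generator T (fun y => D (P y)) (fun y => P (L (P y))) ->
  forall t : R, 0 <= t ->
  exists c : R, 0 < c /\
  forall (n : nat) (x : X), (0 < n)%N ->
    D (P x) -> D (P (L (P x))) ->
    `| iter n (fun y => M (S (t / n%:R) y)) x - T t (P x) |
      <= c / n%:R * (`|x| + `|L (P x)| + `|L (P (L (P x)))|) + delta ^+ n * `|x|.
Proof.
move=> HS gS [lM HM] [bP PP] d0 d1 Mpow b0 PSQ QSP HT gT t t0.
have [[lP _] [cp cp0 HP]] := (bP, bounded_op_ge0 bP).
have [K K0 TK] := C0_semigroup_locally_bounded HT t.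
have c0 := trotter_const_ge0 t0 b0 cp0 K0 (ltW d0) d1.
exists (trotter_const t b cp K delta + 1); split; first by rewrite ltr_wpDl.
move=> n x n0 Dx DLx.
apply: le_trans (trotter_error_le HS gS lM HM lP cp0 HP PP (ltW d0) d1 Mpow b0 PSQ QSP
  HT gT K0 TK t0 n0 Dx DLx) _.
have := mulr_ge0 (exprn_ge0 n (ltW d0)) (normr_ge0 x).
have : 0 <= n%:R^-1 * (`|x| + `|L (P x)| + `|L (P (L (P x)))|) by rewrite mulr_ge0 ?addr_ge0.
set c := trotter_const _ _ _ _ _; lra.
Qed.
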